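(* Let $V$ be a manifold (not necessarily Hausdorff) with a regular $C^r$-differentiable structure, $r\geq 1$. If a real-valued $C^r$ function $f$ on $V$ is of rank $1$ at a point $x\in V$, then $f$ is also of rank $1$ at every point $y\in V$ which is not separated from $x$.
   Context: A $C^r$-differentiable structure ($r$ a positive integer or $\infty$) on an $n$-dimensional (not necessarily Hausdorff) manifold $V$ is given by an atlas of charts $h_i:\mathbb{R}^n\to V$ (homeomorphisms onto open sets covering $V$) whose transition maps $h_j^{-1}h_i$ are $C^r$ homeomorphisms between open subsets of $\mathbb{R}^n$. A function $f:V\to\mathbb{R}$ (or defined on an open subset) is $C^r$ if $f h_i$ is $C^r$ for every chart $h_i$ of the atlas; it is of rank $1$ at $x$ if for a chart $h_i$ whose image contains $x$, $f h_i$ has a nonzero partial derivative at $h_i^{-1}(x)$ (independent of the chart). The structure is regular if for every $x\in V$ and every $C^r$ function $f$ defined on a neighborhood of $x$, there is a $C^r$ function $f'$ defined on all of $V$ coinciding with $f$ on a neighborhood of $x$. Two points $x,y$ are not separated if every neighborhood of $x$ meets every neighborhood of $y$. *)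

From HB Require Import structures.
From mathcomp Require Import all_boot all_order all_algebra.
From mathcomp Require Import all_classical all_reals all_analysis.
Set Implicit Arguments. Unset Strict Implicit. Unset Printing Implicit Defensive.
Import Order.TTheory GRing.Theory Num.Theory.
Import numFieldNormedType.Exports.
Local Open Scope classical_set_scope.
Local Open Scope ring_scope.

Inductive regularity := Fin of nat | Infty.

Section Manifold.
Variable R : realType.
Variable n : nat.
Notation E := 'rV[R]_n.

Definition ebasis (k : 'I_n) : E := delta_mx ord0 k.

Definition partial (k : 'I_n) (g : E -> R) : E -> R :=
  fun a => 'D_(ebasis k) g a.

Fixpoint Ck (m : nat) (g : E -> R) (U : set E) : Prop :=
  (forall a, U a -> {for a, continuous g}) /\
  match m with
  | O => True
  | S m' => (forall k a, U a -> derivable g a (ebasis k)) /\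
            (forall k, Ck m' (partial k g) U)
  end.

Definition Cr (r : regularity) (g : E -> R) (U : set E) : Prop :=
  match r with
  | Fin m => Ck m g U
  | Infty => forall m, Ck m g U
  end.

Definition Cr_vec (r : regularity) (t : E -> E) (U : set E) : Prop :=
  forall j : 'I_n, Cr r (fun a => t a ord0 j) U.

Variable V : topologicalType.
Variable I : Type.

(* h : I -> (R^n -> V) is an atlas of a C^r structure on V:
   each chart is a homeomorphism onto an open subset, the images cover V,
   and the transition maps h_j^{-1} h_i (defined on h_i^{-1}(h_j(R^n)))
   are C^r. *)
Definition C_r_atlas (r : regularity) (h : I -> E -> V) : Prop :=
  (forall i, continuous (h i)) /\
  (forall i, injective (h i)) /\
  (forall i (O : set E), open O -> open (h i @` O)) /\
  (forall v : V, exists i a, h i a = v) /\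
  (forall i j, exists t : E -> E,
     (forall a, (h i @^-1` range (h j)) a -> h j (t a) = h i a) /\
     Cr_vec r t (h i @^-1` range (h j))).

Definition Cr_on (r : regularity) (h : I -> E -> V) (f : V -> R) (W : set V)
  : Prop := forall i, Cr r (f \o h i) (h i @^-1` W).

Definition rank1_at (h : I -> E -> V) (f : V -> R) (x : V) : Prop :=
  exists i a k, h i a = x /\ partial k (f \o h i) a != 0.

Definition regular_structure (r : regularity) (h : I -> E -> V) : Prop :=
  forall (x : V) (W : set V) (f : V -> R),
    open W -> W x -> Cr_on r h f W ->
    exists f' : V -> R, Cr_on r h f' setT /\
      exists N : set V, nbhs x N /\ (forall z, N z -> f' z = f z).

Definition not_separated (x y : V) : Prop :=
  forall U W : set V, nbhs x U -> nbhs y W -> U `&` W !=set0.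

End Manifold.

From HB Require Import structures.
From mathcomp Require Import all_boot all_order all_algebra.
From mathcomp Require Import all_classical all_reals all_analysis.
From mathcomp Require Import ring lra.
Set Implicit Arguments. Unset Strict Implicit. Unset Printing Implicit Defensive.
Import Order.TTheory GRing.Theory Num.Theory.
Import numFieldNormedType.Exports.
Local Open Scope classical_set_scope.
Local Open Scope ring_scope.

(** If f had rank 0 at y, all partial derivatives of F = f h_j would vanish at
    b0 = h_j^-1 y, while d_k (f h_i) (a0) = c <> 0 with h_i a0 = x.  By regularity
    the coordinates of h_j^-1, which are C^r near y, extend to global C^r functions
    G_l, read in the chart h_i as C^r functions Q_l.  As x and y are not separated,
    there are points h_i a with a arbitrarily close to a0 lying in h_j (ball b0 rho)
    where G = h_j^-1, so that f h_i = F o Q near a.  Along a short step of length s in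
    direction e_k the left side moves by more than s |c| / 2 (mean value theorem),
    while F o Q moves by at most s eps \sum_l (|d_k Q_l a0| + 1), since the gradient
    of F is at most eps near b0: a contradiction once eps is small. *)

Lemma cvgr_dist_lt_forall (R : numFieldType) (T : topologicalType) (I : finType)
    (g : I -> T -> R) (x : T) (eps : R) :
  0 < eps -> (forall i, {for x, continuous (g i)}) ->
  \forall y \near x, forall i, `|g i x - g i y| < eps.
Proof.
move=> eps_gt0 gC.
exact: (@filter_forall _ _ (fun i y => `|g i x - g i y| < eps) _ _
  (fun i => cvgr_dist_lt _ _ (gC i) _ eps_gt0)).
Qed.

Lemma nbhs_image_open_map (T U : topologicalType) (g : T -> U) (x : T) (P : set T) :
  (forall O, open O -> open (g @` O)) -> nbhs x P -> nbhs (g x) (g @` P).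
Proof.
move=> g_open Px; apply: filterS (image_subset g (@interior_subset _ P)) _.
by apply: open_nbhs_nbhs; split; [exact: g_open (open_interior P) | exists x].
Qed.

Section MeanValueAlongLine.
Variables (R : realType) (V : normedModType R).
Implicit Types (g : V -> R) (p v : V).

Lemma is_derive_along g p v (s : R) : derivable g (s *: v + p) v ->
  is_derive s 1 (fun t : R => g (t *: v + p)) ('D_v g (s *: v + p)).
Proof.
move=> dg.
have eqf : (fun t : R => t^-1 *: (((fun u : R => g (u *: v + p)) \o shift s) (t *: 1)
             - g (s *: v + p))) =
          (fun t : R => t^-1 *: ((g \o shift (s *: v + p)) (t *: v) - g (s *: v + p))).
  apply: funext => t /=; congr (_ *: (g _ - _)).
  by rewrite [t%:A]mulr1 scalerDl addrA.
by split; rewrite /derivable /derive eqf.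
Qed.

Lemma mean_value_along g p v (s : R) : (forall q, derivable g q v) ->
  exists2 t : R, 0 <= t <= 1 & g (s *: v + p) - g p = s * 'D_v g ((t * s) *: v + p).
Proof.
move=> dg.
have mvt_ge0 (p' : V) (s' : R) : 0 <= s' -> exists2 t : R, 0 <= t <= 1 &
    g (s' *: v + p') - g p' = s' * 'D_v g ((t * s') *: v + p').
  move=> s'0; have [->|s'_neq0] := eqVneq s' 0.
    by exists 0; rewrite ?lexx ?ler01 // scale0r add0r subrr mul0r.
  have s'_gt0 : 0 < s' by rewrite lt_def s'_neq0.
  have line_derive (u : R) := @is_derive_along g p' v u (dg _).
  have line_cont : {within `[0, s'], continuous (fun t : R => g (t *: v + p'))}.
    by apply: derivable_within_continuous => u _; case: (line_derive u).
  have [c c0s' mvt] := MVT_segment s'0 (fun u _ => line_derive u) line_cont.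
  move: mvt; rewrite scale0r add0r subr0 => ->.
  exists (c / s'); last by rewrite divfK // mulrC.
  move: c0s'; rewrite in_itv /= => /andP[c0 cs'].
  by rewrite divr_ge0 //= ler_pdivrMr // mul1r.
have [s0|s_lt0] := leP 0 s; first exact: mvt_ge0.
have Ns0 : 0 <= - s by rewrite oppr_ge0 ltW.
have [t /andP[t0 t1] mvt] := mvt_ge0 (s *: v + p) (- s) Ns0.
exists (1 - t); first by rewrite subr_ge0 t1 /= lerBlDr lerDl.
have -> : (1 - t) * s = t * - s + s by ring.
rewrite scalerDl -addrA -[RHS]opprK -mulNr -mvt.
by rewrite scaleNr addrA addNr add0r opprB.
Qed.
Lemma mean_value_along_le g p v (s K : R) : 0 <= s -> (forall q, derivable g q v) ->
  (forall t, 0 <= t <= 1 -> `|'D_v g ((t * s) *: v + p)| <= K) ->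
  `|g (s *: v + p) - g p| <= s * K.
Proof.
move=> s0 dg DK; have [t t01 ->] := mean_value_along p s dg.
by rewrite normrM ger0_norm // ler_wpM2l // DK.
Qed.

Lemma mean_value_along_gt g p v (s K : R) : 0 < s -> (forall q, derivable g q v) ->
  (forall t, 0 <= t <= 1 -> K < `|'D_v g ((t * s) *: v + p)|) ->
  s * K < `|g (s *: v + p) - g p|.
Proof.
move=> s0 dg DK; have [t t01 ->] := mean_value_along p s dg.
by rewrite normrM gtr0_norm // ltr_pM2l // DK.
Qed.

End MeanValueAlongLine.


Lemma ball_segment (R : realType) (c x y rho t : R) : 0 <= t <= 1 ->
  ball c rho x -> ball c rho y -> ball c rho (t * (y - x) + x).
Proof.
rewrite -!ball_normE /= !ltr_distlC => /andP[t0 t1] /andP[x1 x2] /andP[y1 y2].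
by apply/andP; split; have [xy|yx] := lerP x y; nra.
Qed.

Section RowCoordinates.
Variables (R : realType) (n : nat).
Notation E := 'rV[R]_n.

Lemma ball_rowP (b q : E) (rho : R) :
  ball b rho q <-> 0 < rho /\ forall l, ball (b ord0 l) rho (q ord0 l).
Proof.
split=> [[rho0 bq]|[rho0 bq]]; split=> // i l.
by rewrite (ord1 i); exact: bq.
Qed.

Lemma ball_add_ebasis (a : E) (e t : R) (k : 'I_n) :
  `|t| < e -> ball a e (t *: ebasis R k + a).
Proof.
move=> te; apply/ball_rowP; split=> [|l]; first exact: le_lt_trans te.
rewrite -ball_normE /= !mxE eqxx /=.
have -> : a ord0 l - (t * (l == k)%:R + a ord0 l) = - (t * (l == k)%:R) by ring.
by rewrite normrN; case: (l == k); rewrite ?mulr1 ?mulr0 ?normr0 //; exact: le_lt_trans te.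
Qed.

Lemma ball_step_along_ebasis (a0 a : E) (d e : R) (k : 'I_n) :
  0 < e -> ball a0 (d / 2) a ->
  exists2 s : R, 0 < s & ball a e (s *: ebasis R k + a) /\
    forall t, 0 <= t <= 1 -> ball a0 d ((t * s) *: ebasis R k + a).
Proof.
move=> e_gt0 a0a; have d_gt0 : 0 < d / 2 by case: a0a.
pose s := Num.min e (d / 2) / 2.
have [s_gt0 s_lt_e s_lt_d] : [/\ 0 < s, s < e & s < d / 2].
  have : Num.min e (d / 2) <= e /\ Num.min e (d / 2) <= d / 2.
    by rewrite !ge_min !lexx orbT.
  have : 0 < Num.min e (d / 2) by rewrite lt_min e_gt0.
  by move=> ? [? ?]; rewrite /s; split; lra.
exists s => //; split=> [|t /andP[t0 t1]]; first by apply: ball_add_ebasis; rewrite gtr0_norm.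
have ts : `|t * s| < d / 2.
  have : t * s <= s by rewrite ler_piMl // ltW.
  by rewrite ger0_norm; [lra | exact: mulr_ge0 t0 (ltW s_gt0)].
by rewrite [d]splitr; exact: ball_triangle a0a (ball_add_ebasis _ _ ts).
Qed.

Lemma partial_bounded_lipschitz (F : E -> R) (b0 b b' : E) (rho eps : R) :
  (forall l q, derivable F q (ebasis R l)) ->
  (forall q, ball b0 rho q -> forall l, `|partial l F q| <= eps) ->
  ball b0 rho b -> ball b0 rho b' ->
  `|F b' - F b| <= eps * \sum_(l < n) `|b' ord0 l - b ord0 l|.
Proof.
move=> dF F_bound /ball_rowP[rho0 bb] /ball_rowP[_ bb'].
(* [ball b0 rho] is a box, so it contains the path from [b] to [b'] that changes one
   coordinate at a time, together with its segments. *)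
pose p (m : nat) : E := \row_q (if (q < m)%N then b' ord0 q else b ord0 q).
have -> : F b' - F b = \sum_(m < n) (F (p m.+1) - F (p m)).
  rewrite -(big_mkord xpredT (fun m => F (p m.+1) - F (p m))) telescope_sumr //.
  by congr (F _ - F _); apply/rowP => q; rewrite mxE ?ltn_ord.
rewrite mulr_sumr; apply: (le_trans (ler_norm_sum _ _ _)); apply: ler_sum => m _.
set d := b' ord0 m - b ord0 m.
have -> : p m.+1 = d *: ebasis R m + p m.
  apply/rowP => q; rewrite !mxE eqxx /= ltnS leq_eqVlt.
  have [->|qm] := eqVneq q m; first by rewrite eqxx ltnn mulr1 subrK.
  by rewrite (negbTE (qm : (q : nat) != m)) mulr0 add0r.
have [t t01 ->] := mean_value_along (p m) d (dF m).
rewrite normrM mulrC ler_wpM2r //; apply: F_bound; apply/ball_rowP; split=> // q.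
rewrite !mxE eqxx /=.
have [->|qm] := eqVneq q m; first by rewrite ltnn mulr1; exact: ball_segment.
by rewrite mulr0 add0r; case: ifP.
Qed.

End RowCoordinates.

Section DifferentiabilityClasses.
Variables (R : realType) (n : nat).
Notation E := 'rV[R]_n.

Lemma Ck_continuous (m : nat) (g : E -> R) (U : set E) :
  Ck m g U -> forall a, U a -> {for a, continuous g}.
Proof. by case: m => [|m] []. Qed.

Lemma Cr_C1 (r : regularity) (g : E -> R) (U : set E) : r <> Fin 0 -> Cr r g U ->
  (forall l a, U a -> derivable g a (ebasis R l)) /\
  (forall l a, U a -> {for a, continuous (partial l g)}).
Proof.
case: r => [[|m]|] //= _; last move=> /(_ 1%N).
- by case=> _ [dg cg]; split=> // l; exact: Ck_continuous (cg l).
- by case=> _ [dg cg]; split=> // l; exact: (cg l).1.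
Qed.

Lemma eq_Ck (m : nat) (g1 g2 : E -> R) (U : set E) : open U ->
  (forall a, U a -> g1 a = g2 a) -> Ck m g1 U -> Ck m g2 U.
Proof.
move=> oU.
have near_eq (h1 h2 : E -> R) a : (forall z, U z -> h1 z = h2 z) -> U a ->
    \forall z \near a, h1 z = h2 z.
  by move=> e12 Ua; apply: filterS e12 _; exact: open_nbhs_nbhs.
elim: m g1 g2 => [|m IH] g1 g2 e12 [g1C g1m]; split=> [a Ua|] //.
1,2: apply: cvg_trans (near_eq_cvg (near_eq _ _ _ e12 Ua)) _.
1,2: by rewrite -(e12 a Ua); exact: g1C.
case: g1m => [dg1 pg1]; split=> [k a Ua|k].
  exact: near_eq_derivable (near_eq _ _ _ e12 Ua) (dg1 k a Ua).
by apply: IH (pg1 k) => a Ua; exact: near_eq_derive (near_eq _ _ _ e12 Ua).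
Qed.

Lemma eq_Cr (r : regularity) (g1 g2 : E -> R) (U : set E) : open U ->
  (forall a, U a -> g1 a = g2 a) -> Cr r g1 U -> Cr r g2 U.
Proof.
case: r => [m|] /= oU e12; first exact: eq_Ck.
by move=> g1C m; exact: eq_Ck (g1C m).
Qed.

End DifferentiabilityClasses.

Section FactorizationThroughCriticalPoint.
Variables (R : realType) (n : nat).
Notation E := 'rV[R]_n.
Variables (phi F : E -> R) (Q : 'I_n -> E -> R) (k : 'I_n).
Hypothesis phi_derivable : forall a, derivable phi a (ebasis R k).
Hypothesis Q_derivable : forall l a, derivable (Q l) a (ebasis R k).
Hypothesis F_derivable : forall l b, derivable F b (ebasis R l).

Lemma factor_partial_bound (a b0 : E) (s rho K eps : R) (L : 'I_n -> R) :
  0 < s ->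
  (forall t, 0 <= t <= 1 -> K < `|partial k phi ((t * s) *: ebasis R k + a)|) ->
  (forall t l, 0 <= t <= 1 -> `|partial k (Q l) ((t * s) *: ebasis R k + a)| <= L l) ->
  (forall b, ball b0 rho b -> forall l, `|partial l F b| <= eps) ->
  let a' := s *: ebasis R k + a in
  ball b0 rho (\row_l Q l a) -> ball b0 rho (\row_l Q l a') ->
  phi a = F (\row_l Q l a) -> phi a' = F (\row_l Q l a') ->
  K < eps * \sum_l L l.
Proof.
move=> s_gt0 phi_large Q_small F_small a' Qa Qa' phi_a phi_a'.
rewrite -(ltr_pM2l s_gt0).
apply: lt_le_trans (mean_value_along_gt s_gt0 phi_derivable phi_large) _.
rewrite phi_a' phi_a mulrCA.
apply: le_trans (partial_bounded_lipschitz F_derivable F_small Qa Qa') _.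
have eps_ge0 : 0 <= eps := le_trans (normr_ge0 _) (F_small _ Qa k).
rewrite ler_wpM2l // mulr_sumr ler_sum // => l _; rewrite !mxE.
exact: mean_value_along_le (ltW s_gt0) (@Q_derivable l) (fun t t01 => Q_small t l t01).
Qed.

Variables (a0 b0 : E).
Hypothesis phi_partial_cont : {for a0, continuous (partial k phi)}.
Hypothesis phi_partial_neq0 : partial k phi a0 != 0.
Hypothesis Q_partial_cont : forall l, {for a0, continuous (partial k (Q l))}.
Hypothesis F_partial_cont : forall l, {for b0, continuous (partial l F)}.
Hypothesis F_critical : forall l, partial l F b0 = 0.

Lemma not_near_factor_through_critical : exists2 rho : R, 0 < rho &
  \forall a \near a0,
    ~ \forall a' \near a, ball b0 rho (\row_l Q l a') /\ phi a' = F (\row_l Q l a').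
Proof.
pose c := partial k phi a0.
pose L l := `|partial k (Q l) a0| + 1.
pose eps := `|c| / (2 * (\sum_l L l + 1)).
have c_gt0 : 0 < `|c| by rewrite normr_gt0.
have L_ge0 : 0 <= \sum_l L l by apply: sumr_ge0 => l _; rewrite addr_ge0.
have eps_gt0 : 0 < eps by rewrite divr_gt0 // mulr_gt0 // ltr_wpDl.
have epsL : eps * \sum_l L l < `|c| / 2.
  have : eps * (\sum_l L l + 1) = `|c| / 2 by rewrite /eps; field; lra.
  by rewrite mulrDr mulr1; lra.
have [rho rho_gt0 F_small] : exists2 rho : R, 0 < rho &
    forall b, ball b0 rho b -> forall l, `|partial l F b| <= eps.
  have /nbhs_ballP[rho rho_gt0 near_b0] :=
    cvgr_dist_lt_forall (g := fun l => partial l F) eps_gt0 F_partial_cont.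
  exists rho => // b /near_b0 Fb l.
  by have := Fb l; rewrite F_critical sub0r normrN => /ltW.
have [d d_gt0 near_a0] : exists2 d : R, 0 < d & forall a, ball a0 d a ->
    `|c| / 2 < `|partial k phi a| /\ forall l, `|partial k (Q l) a| <= L l.
  have : \forall a \near a0, `|c - partial k phi a| < `|c| / 2 /\
      forall l, `|partial k (Q l) a0 - partial k (Q l) a| < 1.
    apply: filterI; first exact: (cvgr_dist_lt _ _ phi_partial_cont _ (divr_gt0 c_gt0 _)).
    exact: (cvgr_dist_lt_forall (g := fun l => partial k (Q l)) ltr01 Q_partial_cont).
  move=> /nbhs_ballP[d d_gt0 near]; exists d => // a /near[phi_a Q_a]; split=> [|l].
    by have := ler_normD (c - partial k phi a) (partial k phi a); rewrite subrK; lra.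
  have := ler_normB (partial k (Q l) a0) (partial k (Q l) a0 - partial k (Q l) a).
  by rewrite opprB addrC subrK /L; have := Q_a l; lra.
exists rho => //; apply/nbhs_ballP; exists (d / 2); first by rewrite /= divr_gt0.
move=> a a0a /nbhs_ballP[e e_gt0 near_a].
have [s s_gt0 [a'_near segment]] := ball_step_along_ebasis k e_gt0 a0a.
have [Qa phi_a] := near_a a (ballxx _ e_gt0).
have [Qa' phi_a'] := near_a _ a'_near.
have := factor_partial_bound s_gt0 (fun t t01 => (near_a0 _ (segment t t01)).1)
  (fun t l t01 => (near_a0 _ (segment t t01)).2 l) F_small Qa Qa' phi_a phi_a'.
lra.
Qed.

End FactorizationThroughCriticalPoint.

Lemma Cr_on_setT_C1 (R : realType) (n : nat) (V : topologicalType) (I : Type)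
    (h : I -> 'rV[R]_n -> V) (r : regularity) (f : V -> R) (i : I) :
  r <> Fin 0 -> Cr_on r h f setT ->
  (forall l a, derivable (f \o h i) a (ebasis R l)) /\
  (forall l a, {for a, continuous (partial l (f \o h i))}).
Proof.
move=> r_ne0 /(_ i) /(Cr_C1 r_ne0)[df cf].
by split=> l a; [exact: df | exact: cf].
Qed.

Section ChartInverse.
Variables (R : realType) (n : nat) (V : topologicalType) (I : Type).
Variables (h : I -> 'rV[R]_n -> V) (r : regularity).
Hypothesis atlas : C_r_atlas r h.

Definition chart_inv (j : I) : V -> 'rV[R]_n := 'pinv_(fun=> 0) setT (h j).

Lemma chart_invK j : cancel (h j) (chart_inv j).
Proof.
have [_ [h_inj _]] := atlas.
by move=> b; rewrite /chart_inv (pinvKV _ (in2W (h_inj j))) ?in_setT.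
Qed.

Lemma chart_inv_Cr_on j l : Cr_on r h (fun v => chart_inv j v ord0 l) (range (h j)).
Proof.
have [hC [_ [h_open [_ h_trans]]]] := atlas.
move=> i; have [t [ht tC]] := h_trans i j.
apply: eq_Cr (tC l).
  by apply: open_comp => [a _|]; [exact: hC | exact: h_open openT].
by move=> a /ht /= <-; rewrite chart_invK.
Qed.

Lemma regular_chart_coordinates j (y : V) : regular_structure r h -> range (h j) y ->
  exists G : 'I_n -> V -> R, (forall l, Cr_on r h (G l) setT) /\
    \forall z \near y, forall l, G l z = chart_inv j z ord0 l.
Proof.
have [_ [_ [h_open _]]] := atlas.
move=> reg y_j.
have /choice[G GP] : forall l, exists G : V -> R, Cr_on r h G setT /\
    exists N, nbhs y N /\ forall z, N z -> G z = chart_inv j z ord0 l.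
  by move=> l; exact: reg (h_open j _ openT) y_j (chart_inv_Cr_on j l).
exists G; split=> [l|]; first exact: (GP l).1.
apply: (@filter_forall _ _ (fun l z => G l z = chart_inv j z ord0 l)) => l.
by have [_ [N [yN NG]]] := GP l; exact: filterS yN.
Qed.

End ChartInverse.

Unset Implicit Arguments.

Theorem lemma2 (R : realType) (n : nat) (V : topologicalType) (I : Type)
  (h : I -> 'rV[R]_n -> V) (r : regularity) :
  r <> Fin 0 ->
  C_r_atlas r h -> regular_structure r h ->
  forall f : V -> R, Cr_on r h f setT ->
  forall x y : V, rank1_at h f x -> not_separated x y -> rank1_at h f y.
Proof.
move=> r_ne0 atlas reg f f_Cr x y [i [a0 [k [<- phi_ne0]]]] xy.
apply: contrapT => y_rank0.
have [hC [_ [h_open [h_cover _]]]] := atlas.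
have [j [b0 hb0]] := h_cover y; subst y.
have F_critical l : partial l (f \o h j) b0 = 0.
  by apply: contrapT => /eqP F_ne0; apply: y_rank0; exists j, b0, l.
have [G [G_Cr G_coord]] := regular_chart_coordinates atlas reg (imageT (h j) b0).
have [phi_d phi_c] := Cr_on_setT_C1 i r_ne0 f_Cr.
have [F_d F_c] := Cr_on_setT_C1 j r_ne0 f_Cr.
have Q_C1 l := Cr_on_setT_C1 i r_ne0 (G_Cr l).
have [rho rho_gt0 no_factor] := not_near_factor_through_critical (Q := fun l => G l \o h i)
  (phi_d k) (fun l => (Q_C1 l).1 k) F_d (phi_c k a0) phi_ne0
  (fun l => (Q_C1 l).2 k a0) (fun l => F_c l b0) F_critical.
pose S := h j @` ball b0 rho `&` [set z | forall l, G l z = chart_inv h j z ord0 l].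
have y_S : nbhs (h j b0) S°.
  apply: nbhs_interior; apply: filterI _ G_coord.
  by apply: nbhs_image_open_map (h_open j) _; exact: nbhsx_ballx.
have [_ [[a a_no_factor <-] a_S]] := xy _ _ (nbhs_image_open_map (h_open i) no_factor) y_S.
have near_a_S : \forall a' \near a, S (h i a') := hC i a S a_S.
apply: a_no_factor; apply: filterS near_a_S => a' [[b' b'_ball hb'] G_b'].
have -> : \row_l (G l \o h i) a' = b'.
  by apply/rowP => l; rewrite mxE /= G_b' -hb' (chart_invK atlas).
by rewrite /= -hb'.
Qed.
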